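(* Let $G=(V,E,T,c)$ be a $k$-terminal network and let $S\subset T$ with $S\neq\emptyset,T$. Then there exists a component $C\in CC(E_S)$ that is elementary, i.e. $\delta(C)=E_{C\cap T}$ and $|CC(\delta(C))|=2$.
   Context: A $k$-terminal network $G=(V,E,T,c)$ is a finite connected undirected graph $(V,E)$ with edge weights (capacities) $c:E\to\mathbb{R}_{>0}$ and a set $T\subseteq V$ of $|T|=k$ terminals. For $F\subseteq E$ let $c(F)=\sum_{e\in F}c(e)$; for $W\subseteq V$ let $\delta(W)$ be the set of edges with exactly one endpoint in $W$. For $S\subset T$ with $S\neq\emptyset,T$, write $\bar S=T\setminus S$; a cut $(W,V\setminus W)$ is $S$-separating if $W\cap T\in\{S,\bar S\}$, and $\mathrm{mincut}_G(S)$ is the minimum of $c(\delta(W))$ over all $S$-separating cuts. It is assumed (e.g. by a generic perturbation of the weights) that the minimizing cutset is unique; it is denoted $E_S$ (so $E_S=E_{\bar S}$). For $F\subseteq E$, $CC(F)$ denotes the set of vertex sets of connected components of $(V,E\setminus F)$. *)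

From HB Require Import structures.
From mathcomp Require Import all_boot all_order all_algebra.
Set Implicit Arguments. Unset Strict Implicit. Unset Printing Implicit Defensive.
Import Order.TTheory GRing.Theory Num.Theory.

(* A network: vertex type V, edge type E, each edge e joins the endpoints
   eu e and ev e (undirected). *)
Section Network.
Variables (V E : finType) (R : realFieldType).
Variables (eu ev : E -> V) (c : E -> R).

Definition delta (W : {set V}) : {set E} :=
  [set e | (eu e \in W) != (ev e \in W)].

Definition cost (F : {set E}) : R := (\sum_(e in F) c e)%R.

Definition adj_wo (F : {set E}) : rel V :=
  fun x y => [exists e, (e \notin F) &&
     (((eu e == x) && (ev e == y)) || ((eu e == y) && (ev e == x)))].

Definition CC (F : {set E}) : {set {set V}} :=
  [set [set y | connect (adj_wo F) x y] | x : V].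

Definition connected_graph : Prop :=
  forall x y : V, connect (adj_wo set0) x y.

Definition separating (T S W : {set V}) : bool :=
  (W :&: T == S) || (W :&: T == T :\: S).

Definition is_min_cut (T S : {set V}) (F : {set E}) : Prop :=
  [/\ S != set0, S \proper T,
      (exists2 W, separating T S W & F = delta W) &
      (forall W, separating T S W -> (cost F <= cost (delta W))%R)].

End Network.

From Pilot Require Import Defs.
From HB Require Import structures.
From mathcomp Require Import all_boot all_order all_algebra.
From mathcomp Require Import lra.
Import Order.TTheory GRing.Theory Num.Theory.
Set Implicit Arguments. Unset Strict Implicit. Unset Printing Implicit Defensive.

(* Let W be a side of the minimum S-cut E_S.  For a component C of G - E_S lying in W,
   uncrossing any cut X with X :&: T = C :&: T against W :\: C gives, by submodularity,
   an S-separating cut of cost at most c(E_S) + c(delta X) - c(delta C); hence delta C is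
   a minimum (C :&: T)-cut, and taking X = set0 shows that C contains a terminal.  So it
   remains to find a component C whose complement is connected in G - delta C: among all
   pairs of a component C of G - E_S and a component K of G - C, take one with K of
   maximal size.  If some vertex z outside C were not in K, then C and K would both lie
   in one component of G - delta C', where C' is the component of z, contradicting
   maximality. *)

Section Components.
Variables (V E : finType) (eu ev : E -> V).

Local Notation delta := (delta eu ev).
Local Notation adj := (adj_wo eu ev).
Implicit Types (F : {set E}) (e : E) (a b u v w x y z : V).

Definition component (F : {set E}) (x : V) : {set V} := [set y | connect (adj F) x y].

Lemma adj_wo_sym F : symmetric (adj F).
Proof.
by move=> x y; apply/existsP/existsP => -[e /andP[eF exy]]; exists e; rewrite eF orbC.
Qed.

Lemma adj_wo_edge F e : e \notin F -> adj F (eu e) (ev e).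
Proof. by move=> eF; apply/existsP; exists e; rewrite eF !eqxx. Qed.

Lemma adj_wo_delta F (A : {set V}) a b :
  adj F a b -> a \notin A -> b \notin A -> adj (delta A) a b.
Proof.
move=> /existsP[e /andP[_ eab]] aA bA; apply/existsP; exists e; rewrite eab andbT inE.
by case/orP: eab => /andP[/eqP-> /eqP->]; rewrite (negbTE aA) (negbTE bA).
Qed.

Lemma closed_adj_wo F (K : {set V}) : delta K \subset F -> closed (adj F) K.
Proof.
move=> sKF x y /existsP[e /andP[eF exy]].
have : e \notin delta K by apply: contra eF; apply: subsetP.
by rewrite inE negbK => /eqP; case/orP: exy => /andP[/eqP-> /eqP->].
Qed.

Lemma deltaC (K : {set V}) : delta (~: K) = delta K.
Proof. by apply/setP => e; rewrite !inE; case: (eu e \in K); case: (ev e \in K). Qed.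

Lemma component_refl F x : x \in component F x.
Proof. by rewrite inE connect0. Qed.

Lemma component_sym F x y : (y \in component F x) = (x \in component F y).
Proof. by rewrite !inE; apply: sym_connect_sym; apply: adj_wo_sym. Qed.

Lemma component_eq F x y : y \in component F x -> component F y = component F x.
Proof.
rewrite inE => xy; apply/setP => z; rewrite !inE.
exact/esym/(same_connect (sym_connect_sym (@adj_wo_sym F))).
Qed.

Lemma component_sub F (K : {set V}) x :
  delta K \subset F -> x \in K -> component F x \subset K.
Proof.
move=> sKF xK; apply/subsetP => y; rewrite inE.
by move/(closed_connect (closed_adj_wo sKF)) <-.
Qed.

Lemma sub_component F F' x : F \subset F' -> component F' x \subset component F x.
Proof.
move=> sFF'; apply/subsetP => y; rewrite !inE; apply: connect_sub => u v.
move=> /existsP[e /andP[eF' euv]]; apply: connect1; apply/existsP; exists e.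
by rewrite euv andbT; apply: contra eF'; apply: subsetP.
Qed.

Lemma delta_component_sub F x : delta (component F x) \subset F.
Proof.
apply/subsetP => e; apply: contraTT => eF; rewrite !inE negbK; apply/eqP.
exact: (connect_closed (sym_connect_sym (@adj_wo_sym F))) (adj_wo_edge eF).
Qed.

Lemma component_delta_component F x :
  component (delta (component F x)) x = component F x.
Proof.
apply/eqP; rewrite eqEsubset component_sub ?component_refl //.
exact/sub_component/delta_component_sub.
Qed.

(* A path avoiding [F] inside the complement of [A] uses no edge of [delta A]. *)
Lemma component_sub_delta F (A : {set V}) u :
  component F u \subset ~: A -> component F u \subset component (delta A) u.
Proof.
move=> sCA; apply/subsetP => w; rewrite !inE => /connectP[p pth ->].
apply/connectP; exists p => //; apply: (sub_in_path (P := [predC A])) (pth).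
  by move=> a b; rewrite !inE => aA bA /adj_wo_delta; apply.
apply/allP => v /(path_connect pth) uv; rewrite inE /=.
by have := subsetP sCA v; rewrite !inE; apply.
Qed.

Lemma delta_endpoints (K : {set V}) e : e \in delta K ->
  exists a b, [/\ a \in K, b \notin K &
    forall A : {set V}, (e \in delta A) = ((a \in A) != (b \in A))].
Proof.
rewrite inE; case: (boolP (eu e \in K)) => euK; case: (boolP (ev e \in K)) => evK // _.
  by exists (eu e), (ev e); split=> // A; rewrite inE.
by exists (ev e), (eu e); split=> // A; rewrite inE eq_sym.
Qed.

Hypothesis Hconn : connected_graph eu ev.

Lemma connected_delta_neq0 (K : {set V}) x y :
  x \in K -> y \notin K -> delta K != set0.
Proof.
move=> xK yK; apply/eqP => dK0.
have clK : closed (adj set0) K by apply: closed_adj_wo; rewrite dK0 sub0set.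
by move: yK; rewrite -(closed_connect clK (Hconn x y)) xK.
Qed.

(* The edge [e] leaving [K] enters [C] and is not cut by the component [Z]
   containing [C], so [Z] meets [K]. *)
Lemma component_complement_proper F x y z :
  y \notin component F x -> z \notin component F x ->
  z \notin component (delta (component F x)) y ->
  component (delta (component F x)) y \proper component (delta (component F z)) x.
Proof.
set C := component F x; set C' := component F z.
set K := component (delta C) y; set Z := component (delta C') x => yC zC zK.
have xC : x \in C by apply: component_refl.
have KC : K \subset ~: C by apply: component_sub; [rewrite deltaC | rewrite inE].
have CC' : C \subset ~: C'.
  apply/subsetP => w wC; rewrite inE; apply: contra zC => wC'.
  by rewrite /C -(component_eq wC) -component_sym.
have KC' : K \subset ~: C'.
  apply/subsetP => w wK; rewrite inE; apply: contra zK => wC'.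
  have wz : w \in component (delta C) z.
    exact: subsetP (sub_component z (delta_component_sub F x)) w wC'.
  by rewrite /K -(component_eq wK) (component_eq wz) component_refl.
have CZ : C \subset Z by apply: component_sub_delta.
have xK : x \notin K by apply: contraL xC => /(subsetP KC); rewrite inE.
have [e eK] := set0Pn _ (connected_delta_neq0 (component_refl _ y) xK).
have [a [b [aK bK deltaE]]] := delta_endpoints eK.
have aC : a \notin C by have := subsetP KC a aK; rewrite inE.
have bC : b \in C.
  have : e \in delta C by apply: subsetP (delta_component_sub _ _) e eK.
  by rewrite deltaE (negbTE aC); case: (b \in C).
have eC' : e \notin delta C'.
  have := subsetP KC' a aK; have := subsetP CC' b bC; rewrite deltaE !inE.
  by move=> /negbTE-> /negbTE->.
have eZ : e \notin delta Z.
  by apply: (contraNN _ eC'); apply: subsetP; apply: delta_component_sub.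
have aZ : a \in Z by move: eZ; rewrite deltaE (subsetP CZ b bC) negbK => /eqP.
apply/properP; split; last by exists x; rewrite ?component_refl.
rewrite /K /Z -(component_eq aK) -(component_eq aZ).
by apply: component_sub_delta; rewrite (component_eq aK).
Qed.

Lemma exists_component_connected_complement F x0 y0 : y0 \notin component F x0 ->
  exists x y, y \notin component F x /\
    component (delta (component F x)) y = ~: component F x.
Proof.
move=> y0x0; pose P (p : V * V) := p.2 \notin component F p.1.
have [[x y] /= yx maxp] :=
  @arg_maxnP _ (x0, y0) P (fun p => #|component (delta (component F p.1)) p.2|) y0x0.
exists x, y; split=> //; apply/eqP; rewrite eqEsubset; apply/andP; split.
  by apply: component_sub; [rewrite deltaC | rewrite inE].
apply/subsetP => z; rewrite inE => zC; apply: contraT => zK.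
have xz : P (z, x) by rewrite /P /= -component_sym.
have /proper_card := component_complement_proper yx zC zK.
by rewrite ltnNge (maxp _ xz).
Qed.

Lemma CC_delta_card2 (C : {set V}) x y :
  component (delta C) x = C -> component (delta C) y = ~: C ->
  #|CC eu ev (delta C)| = 2.
Proof.
move=> Cx Cy; have xC : x \in C by rewrite -Cx component_refl.
have -> : CC eu ev (delta C) = [set C; ~: C].
  apply/setP => X; apply/imsetP/set2P => [[w _ ->]|[]->].
  - have [wC|wC] := boolP (w \in C); [left; rewrite -[RHS]Cx|right; rewrite -[RHS]Cy];
      by apply: component_eq; rewrite ?Cx ?Cy ?inE.
  - by exists x.
  - by exists y.
suff CnC : C != ~: C by rewrite cards2 CnC.
have : x \notin ~: C by rewrite inE xC.
by apply: contraNneq => <-.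
Qed.

End Components.

Section Cuts.
Variables (V E : finType) (R : realFieldType) (eu ev : E -> V) (c : E -> R).
Hypothesis c_gt0 : forall e, (0 < c e)%R.

Local Notation delta := (delta eu ev).
Local Notation cost := (cost c).
Implicit Types (F : {set E}) (K W X : {set V}).

Lemma cost_ge0 F : (0 <= cost F)%R.
Proof. by apply: sumr_ge0 => e _; apply: ltW. Qed.

Lemma cost_gt0 F : F != set0 -> (0 < cost F)%R.
Proof.
case/set0Pn => e eF; rewrite /Defs.cost (bigD1 e) //=.
by rewrite ltr_pwDl ?c_gt0 //; apply: sumr_ge0 => f _; apply: ltW.
Qed.

Lemma cost_deltaE K :
  cost (delta K) = (\sum_e if (eu e \in K) != (ev e \in K) then c e else 0)%R.
Proof. by rewrite /Defs.cost big_mkcond; apply: eq_bigr => e _; rewrite inE. Qed.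

Lemma cost_delta_submod X K :
  (cost (delta (X :|: K)) + cost (delta (X :&: K)) <= cost (delta X) + cost (delta K))%R.
Proof.
rewrite !cost_deltaE -!big_split; apply: ler_sum => e _; rewrite !inE.
have := c_gt0 e.
by case: (eu e \in X); case: (ev e \in X); case: (eu e \in K); case: (ev e \in K);
  rewrite /=; lra.
Qed.

Lemma cost_delta_setD W K : K \subset W -> delta K \subset delta W ->
  cost (delta W) = (cost (delta K) + cost (delta (W :\: K)))%R.
Proof.
move=> sKW sdKW; rewrite !cost_deltaE -big_split; apply: eq_bigr => e _ /=.
move: (subsetP sKW (eu e)) (subsetP sKW (ev e)) (subsetP sdKW e); rewrite !inE.
by case: (eu e \in K); case: (ev e \in K); case: (eu e \in W); case: (ev e \in W);
  rewrite /= ?addr0 ?add0r //; do ?[by move=> /(_ isT) | move=> _].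
Qed.

(* Submodularity applied to [X] and [W :\: K]. *)
Lemma cost_delta_piece W K X : K \subset W -> delta K \subset delta W ->
  (cost (delta W) <= cost (delta (X :|: (W :\: K))))%R ->
  (cost (delta K) <= cost (delta X))%R.
Proof.
move=> sKW sdKW; rewrite (cost_delta_setD sKW sdKW) => minW.
have := cost_delta_submod X (W :\: K); have := cost_ge0 (delta (X :&: (W :\: K))).
lra.
Qed.

End Cuts.

Section Separating.
Variable V : finType.
Implicit Types T S K W X : {set V}.

Lemma separating_trace T S W X :
  X :&: T = W :&: T -> separating T S X = separating T S W.
Proof. by rewrite /separating => ->. Qed.

Lemma separating_setC T S W :
  S \subset T -> separating T S W -> separating T S (~: W).
Proof.
move=> /subsetP sST /orP[]/eqP/setP traceW; apply/orP; [right|left]; apply/eqP/setP => v;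
  move: (traceW v) (sST v); rewrite !inE;
  by case: (v \in W); case: (v \in T); case: (v \in S) => // _ /(_ isT).
Qed.

Lemma trace_setU_setD T K W X : K \subset W -> X :&: T = K :&: T ->
  (X :|: (W :\: K)) :&: T = W :&: T.
Proof.
move=> /subsetP sKW /setP traceX; apply/setP => v; move: (traceX v) (sKW v); rewrite !inE.
by case: (v \in X); case: (v \in T); case: (v \in K); case: (v \in W) => // _ /(_ isT).
Qed.

End Separating.

Section MinimumCut.
Variables (V E : finType) (R : realFieldType) (eu ev : E -> V) (c : E -> R).
Variables (T S W : {set V}).
Hypothesis c_gt0 : forall e, (0 < c e)%R.
Hypothesis Hconn : connected_graph eu ev.
Hypothesis S_neq0 : S != set0.
Hypothesis S_proper : S \proper T.
Hypothesis sepW : separating T S W.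
Hypothesis minW :
  forall X, separating T S X -> (cost c (delta eu ev W) <= cost c (delta eu ev X))%R.

Local Notation delta := (delta eu ev).
Local Notation cost := (cost c).
Local Notation component := (component eu ev).

Lemma min_cut_side x : exists2 W', separating T S W' & delta W' = delta W /\ x \in W'.
Proof.
have [xW|xW] := boolP (x \in W); first by exists W.
exists (~: W); last by rewrite deltaC inE.
exact: separating_setC (proper_sub S_proper) sepW.
Qed.

Lemma component_cost_min x X : X :&: T = component (delta W) x :&: T ->
  (cost (delta (component (delta W) x)) <= cost (delta X))%R.
Proof.
move=> traceX; have [W' sepW' [dW' xW']] := min_cut_side x.
have sCW' : component (delta W) x \subset W' by rewrite -dW' component_sub.
have sdCW' : delta (component (delta W) x) \subset delta W'.
  by rewrite dW' delta_component_sub.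
apply: (cost_delta_piece c_gt0 sCW' sdCW'); rewrite dW'; apply: minW.
by rewrite (separating_trace _ (trace_setU_setD sCW' traceX)).
Qed.

Lemma component_meets_terminals x : component (delta W) x :&: T != set0.
Proof.
apply/negP => /eqP CT0.
have [t tS] := set0Pn _ S_neq0; have tT := subsetP (proper_sub S_proper) t tS.
have tC : t \notin component (delta W) x.
  by apply/negP => tC; have := in_set0 t; rewrite -CT0 inE tC tT.
have := @component_cost_min x set0; rewrite set0I CT0 => /(_ erefl).
have -> : delta set0 = set0 by apply/setP => e; rewrite !inE.
rewrite /Defs.cost big_set0 leNgt => /negP; apply; apply: cost_gt0 => //.
by apply: (connected_delta_neq0 Hconn (x := x) (y := t)); rewrite ?component_refl.
Qed.

Lemma terminals_disconnected : exists x y, y \notin component (delta W) x.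
Proof.
have [t tS] := set0Pn _ S_neq0; have [_ [t' t'T t'S]] := properP S_proper.
exists t, t'; have [W' sepW' [dW' tW']] := min_cut_side t.
have sCW' : component (delta W) t \subset W' by rewrite -dW' component_sub.
apply: contra t'S => /(subsetP sCW') t'W'.
have tT := subsetP (proper_sub S_proper) t tS.
case/orP: sepW' => /eqP/setP traceW'.
  by have := traceW' t'; rewrite !inE t'W' t'T.
by have := traceW' t; rewrite !inE tW' tT tS.
Qed.

Lemma component_is_min_cut x : ~~ (T \subset component (delta W) x) ->
  is_min_cut eu ev c T (component (delta W) x :&: T) (delta (component (delta W) x)).
Proof.
move=> TC; split.
- exact: component_meets_terminals.
- apply/properP; split; first exact: subsetIr.
  by have [t tT tC] := subsetPn TC; exists t; rewrite // inE (negbTE tC).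
- by exists (component (delta W) x); rewrite // /separating eqxx.
move=> X /orP[]/eqP traceX; first exact: component_cost_min traceX.
rewrite -[delta X]deltaC; apply: component_cost_min; apply/setP => v.
move/setP: traceX => /(_ v).
rewrite !(in_setI, in_setD, in_setC).
by case: (v \in X); case: (v \in T); case: (v \in component (delta W) x).
Qed.

End MinimumCut.

Theorem lemma2p4 (V E : finType) (R : realFieldType)
  (eu ev : E -> V) (c : E -> R) (T S : {set V})
  (* undirected simple graph: no loops, no parallel edges *)
  (Hloop : forall e, eu e != ev e)
  (Hsimple : forall e f, [set eu e; ev e] = [set eu f; ev f] -> e = f)
  (Hconn : connected_graph eu ev)
  (Hpos : forall e, (0 < c e)%R)
  (* uniqueness of minimum cutsets (generic weights) *)
  (Huniq : forall S' F1 F2, is_min_cut eu ev c T S' F1 ->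
                            is_min_cut eu ev c T S' F2 -> F1 = F2)
  (HS0 : S != set0) (HST : S \proper T)
  (ES : {set E}) (HES : is_min_cut eu ev c T S ES) :
  exists2 C : {set V}, C \in CC eu ev ES &
    is_min_cut eu ev c T (C :&: T) (delta eu ev C) /\
    #|CC eu ev (delta eu ev C)| = 2.
Proof.
case: HES => _ _ [W sepW ->] minW.
have [x0 [y0 y0x0]] := terminals_disconnected eu ev HS0 HST sepW.
have [x [y [yx Cy]]] := exists_component_connected_complement Hconn y0x0.
exists (component eu ev (delta eu ev W) x); first by apply/imsetP; exists x.
split; last exact: CC_delta_card2 (component_delta_component _ _ _ _) Cy.
apply: (component_is_min_cut Hpos Hconn HS0 HST sepW minW).
have /set0Pn[t] := component_meets_terminals Hpos Hconn HS0 HST sepW minW y.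
rewrite in_setI => /andP[ty tT]; apply/subsetPn; exists t => //.
by apply: contra yx => tx; rewrite -(component_eq tx) -component_sym.
Qed.
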